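(* Fix a replacement rule $\{p_{(R,\alpha)}(\mathbf{x})\}_{(R,\alpha)}$ satisfying the Fixation Axiom and a mutational bias $\nu\in(0,1)$. Then for each state $\mathbf{x}\in\{0,1\}^G$, $\lim_{u\to0}\pi_{\mathrm{MSS}}(\mathbf{x})$ exists and $$\lim_{u\to0}\pi_{\mathrm{MSS}}(\mathbf{x})=\begin{cases}\dfrac{\nu b(\mathbf{a})\rho_A}{\nu b(\mathbf{a})\rho_A+(1-\nu)b(\mathbf{A})\rho_a} & \mathbf{x}=\mathbf{A},\\[3mm] \dfrac{(1-\nu)b(\mathbf{A})\rho_a}{\nu b(\mathbf{a})\rho_A+(1-\nu)b(\mathbf{A})\rho_a} & \mathbf{x}=\mathbf{a},\\[3mm] 0 & \mathbf{x}\notin\{\mathbf{a},\mathbf{A}\},\end{cases}$$ where $\rho_A,\rho_a$ are the fixation probabilities for this replacement rule at $u=0$.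
   Context: Setting. $G$ is a finite nonempty set of genetic sites, $n=|G|$. A state is $\mathbf{x}\in\{0,1\}^G$ ($x_g=1$: allele $A$ at site $g$; $0$: allele $a$). For $S\subseteq G$, $\mathbf{1}_S$ has $x_g=1$ iff $g\in S$; $\mathbf{a}=\mathbf{1}_\emptyset$, $\mathbf{A}=\mathbf{1}_G$. A replacement event is $(R,\alpha)$ with $R\subseteq G$, $\alpha:R\to G$; a replacement rule gives for each state a probability distribution $\{p_{(R,\alpha)}(\mathbf{x})\}$ over events. With mutation probability $u\in[0,1]$ and bias $\nu\in(0,1)$, the evolutionary Markov chain moves from $\mathbf{x}$: draw $(R,\alpha)$ with probability $p_{(R,\alpha)}(\mathbf{x})$; independently for $g\in R$, $x'_g=x_{\alpha(g)}$ w.p. $1-u$, $x'_g=1$ w.p. $u\nu$, $x'_g=0$ w.p. $u(1-\nu)$; $x'_g=x_g$ for $g\notin R$. $P^{(t)}_{\mathbf{x}\to\mathbf{y}}$ denotes $t$-step transition probabilities. Fixation Axiom: there exist $g\in G$, $m\ge1$, events $(R_k,\alpha_k)_{k=1}^m$ with $p_{(R_k,\alpha_k)}(\mathbf{x})>0$ for all $k,\mathbf{x}$, $g\in R_k$ for some $k$, and $\tilde\alpha_1\circ\cdots\circ\tilde\alpha_m(h)=g$ for all $h\in G$, where $\tilde\alpha_k$ equals $\alpha_k$ on $R_k$ and the identity elsewhere. Quantities: $e_{gh}(\mathbf{x})=\sum_{(R,\alpha):h\in R,\alpha(h)=g}p_{(R,\alpha)}(\mathbf{x})$, $b_g=\sum_h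 e_{gh}$, $d_g=\sum_h e_{hg}$, $b=\sum_gb_g$. At $u=0$, $\mathbf{a},\mathbf{A}$ are absorbing and absorption occurs a.s. Mutant appearance distributions: $\mu_A(\mathbf{1}_{\{g\}})=d_g(\mathbf{a})/b(\mathbf{a})$ (zero on other states), $\mu_a(\mathbf{1}_{G\setminus\{g\}})=d_g(\mathbf{A})/b(\mathbf{A})$ (zero elsewhere); $\rho_A=\sum_\mathbf{x}\mu_A(\mathbf{x})\lim_{t\to\infty}P^{(t)}_{\mathbf{x}\to\mathbf{A}}$, $\rho_a=\sum_\mathbf{x}\mu_a(\mathbf{x})\lim_{t\to\infty}P^{(t)}_{\mathbf{x}\to\mathbf{a}}$, both computed at $u=0$. For $u>0$ the chain has a unique stationary distribution $\pi_{\mathrm{MSS}}$ (mutation–selection stationary distribution). *)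

From HB Require Import structures.
From mathcomp Require Import all_boot all_order all_algebra.
From mathcomp Require Import all_classical all_reals all_analysis.
Set Implicit Arguments. Unset Strict Implicit. Unset Printing Implicit Defensive.
Import Order.TTheory GRing.Theory Num.Theory numFieldNormedType.Exports.
Local Open Scope ring_scope.

Section Evo.
Variables (G : finType) (R : realType).

(* A state x in {0,1}^G : x g = true means allele A at site g. *)
Definition state := {ffun G -> bool}.
Definition ind (S : {set G}) : state := [ffun g => g \in S].
Definition allA : state := [ffun _ => true].
Definition alla : state := [ffun _ => false].

(* A replacement event (R, alpha), R subset of G, alpha : R -> G, encoded
   bijectively as e : G -> option G with e g = Some (alpha g) if g \in R
   and e g = None if g \notin R. *)
Definition event := {ffun G -> option G}.
Definition ev_set (e : event) : {set G} := [set g | e g != None].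
Definition tilde (e : event) (h : G) : G := if e h is Some k then k else h.

Definition replacement_rule (p : state -> event -> R) :=
  forall x, (forall e, 0 <= p x e) /\ \sum_e p x e = 1.

Definition fixation_axiom (p : state -> event -> R) :=
  exists g : G, exists s : seq event,
    [/\ (0 < size s)%N,
        (forall e, e \in s -> forall x, 0 < p x e),
        (exists2 e, e \in s & g \in ev_set e) &
        forall h, foldr tilde h s = g].

Definition edge (p : state -> event -> R) (x : state) (g h : G) : R :=
  \sum_(e : event | e h == Some g) p x e.
Definition birth p x g := \sum_h edge p x g h.
Definition death p x g := \sum_h edge p x h g.
Definition btot p x := \sum_g birth p x g.

Definition site_prob (u nu : R) (e : event) (x : state) (g : G) (bv : bool) : R :=
  match e g with
  | None => (bv == x g)%:R
  | Some h => (1 - u) * (bv == x h)%:R + (if bv then u * nu else u * (1 - nu))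
  end.

Definition trans (p : state -> event -> R) (u nu : R) (x y : state) : R :=
  \sum_e p x e * \prod_g site_prob u nu e x g (y g).

Fixpoint trans_n p u nu (t : nat) (x y : state) : R :=
  match t with
  | 0 => (x == y)%:R
  | t'.+1 => \sum_z trans_n p u nu t' x z * trans p u nu z y
  end.

Definition absorb_prob p (x y : state) : R :=
  limn (fun t => trans_n p 0 0 t x y).
Definition rhoA p : R :=
  \sum_g (death p alla g / btot p alla) * absorb_prob p (ind [set g]) allA.
Definition rhoa p : R :=
  \sum_g (death p allA g / btot p allA) * absorb_prob p (ind [set~ g]) alla.

Definition stationary (P : state -> state -> R) (pi : state -> R) :=
  [/\ forall x, 0 <= pi x, \sum_x pi x = 1 & forall y, \sum_x pi x * P x y = pi y].

Definition limit_value p (nu : R) (x : state) : R :=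
  let D := nu * btot p alla * rhoA p + (1 - nu) * btot p allA * rhoa p in
  if x == allA then nu * btot p alla * rhoA p / D
  else if x == alla then (1 - nu) * btot p allA * rhoa p / D
  else 0.

End Evo.

From HB Require Import structures.
From mathcomp Require Import all_boot all_order all_algebra.
From mathcomp Require Import all_classical all_reals all_analysis.
From mathcomp Require Import ring lra.
Set Implicit Arguments. Unset Strict Implicit. Unset Printing Implicit Defensive.
Import Order.TTheory GRing.Theory Num.Theory numFieldNormedType.Exports.
Local Open Scope ring_scope.
Local Open Scope classical_set_scope.

(* At u = 0 the chain moves x to [act e x] with probability [p x e], so the monomorphic
   states A and a are absorbing. The Fixation Axiom provides a fixed sequence of events, each
   of probability bounded below, after which every state is monomorphic; hence absorption is
   certain, and since P_u^t depends continuously on u, pi_u puts vanishing mass on polymorphic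
   states as u -> 0. Let h be the probability of absorption in A, a harmonic function of the
   u = 0 chain. Stationarity gives sum_x pi_u(x) (P_u h - h)(x) / u = 0, and (P_u h - h) / u
   tends to the derivative of P_u h at u = 0, in which only single-site mutations survive: it
   equals -(1 - nu) b(A) rho_a at A and nu b(a) rho_A at a. Together with
   pi_u(A) + pi_u(a) -> 1 this linear system determines the limits. *)

Lemma prod_ffun_eq (R : comNzRingType) (I : finType) (T : eqType) (y z : {ffun I -> T}) :
  \prod_i ((y i == z i)%:R : R) = (y == z)%:R.
Proof.
have [->|neq_yz] := eqVneq y z; first by rewrite big1 // => i _; rewrite eqxx.
have [i /negbTE yz_i] : exists i, y i != z i.
  apply/existsP; apply: contraNT neq_yz => /existsPn eq_yz.
  by apply/eqP/ffunP => i; exact/eqP/negPn.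
by rewrite (bigD1 i) //= yz_i mul0r.
Qed.

Lemma sum_eq_indicator (R : nzSemiRingType) (T : finType) (c : T) :
  \sum_y ((y == c)%:R : R) = 1.
Proof. by rewrite (bigD1 c) //= eqxx big1 ?addr0 // => y /negbTE ->. Qed.

Lemma cvg_sum (K : numFieldType) (T : Type) (F : set_system T) {FF : Filter F}
    (I : Type) (r : seq I) (P : pred I) (f : I -> T -> K) (l : I -> K) :
  (forall i, P i -> f i x @[x --> F] --> l i) ->
  \sum_(i <- r | P i) f i x @[x --> F] --> \sum_(i <- r | P i) l i.
Proof. by move=> cvg_f; apply: cvg_big => //; exact: (@add_continuous K^o). Qed.

Lemma cvg_sum0 (K : numFieldType) (T : Type) (F : set_system T) {FF : Filter F}
    (I : Type) (r : seq I) (P : pred I) (f : I -> T -> K) :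
  (forall i, P i -> f i x @[x --> F] --> 0) -> \sum_(i <- r | P i) f i x @[x --> F] --> 0.
Proof.
move=> f_cvg0; suff : \sum_(i <- r | P i) f i x @[x --> F] --> \sum_(i <- r | P i) (0 : K).
  by rewrite big1.
by apply: cvg_sum.
Qed.

Section Kernel.
Variables (G : finType) (R : realType) (p : state G -> event G -> R).
Hypothesis p_rule : replacement_rule p.

Definition act (e : event G) (x : state G) : state G := [ffun g => x (tilde e g)].

Lemma act_const e v : act e [ffun _ => v] = [ffun _ => v].
Proof. by apply/ffunP => g; rewrite !ffunE. Qed.

Lemma act_allA e : act e (allA G) = allA G. Proof. exact: act_const. Qed.
Lemma act_alla e : act e (alla G) = alla G. Proof. exact: act_const. Qed.

Lemma p_ge0 x e : 0 <= p x e.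
Proof. by have [] := p_rule x. Qed.

Lemma p_sum1 x : \sum_e p x e = 1.
Proof. by have [] := p_rule x. Qed.

Lemma site_prob0 (nu : R) (e : event G) x g b : site_prob 0 nu e x g b = (b == act e x g)%:R.
Proof.
rewrite /site_prob ffunE /tilde; case: (e g) => [h|] //.
by rewrite !mul0r subr0 mul1r; case: b; rewrite addr0.
Qed.

Lemma trans0 nu x y : trans p 0 nu x y = \sum_e p x e * (y == act e x)%:R.
Proof.
apply: eq_bigr => e _; rewrite -prod_ffun_eq.
by congr (_ * _); apply: eq_bigr => g _; rewrite site_prob0 ffunE.
Qed.

Lemma trans_n0_nu nu t x y : trans_n p 0 nu t x y = trans_n p 0 0 t x y.
Proof. by elim: t y => [|t IH] y //=; apply: eq_bigr => z _; rewrite IH !trans0. Qed.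

Lemma site_prob_ge0 (u nu : R) (e : event G) x g b : 0 <= u <= 1 -> 0 <= nu <= 1 ->
  0 <= site_prob u nu e x g b.
Proof.
move=> /andP[u0 u1] /andP[nu0 nu1]; rewrite /site_prob.
case: (e g) => [h|]; last exact: ler0n.
by apply: addr_ge0; [rewrite mulr_ge0 ?subr_ge0|case: b; rewrite mulr_ge0 ?subr_ge0].
Qed.

Lemma trans_ge0 u nu x y : 0 <= u <= 1 -> 0 <= nu <= 1 -> 0 <= trans p u nu x y.
Proof.
move=> u01 nu01; apply: sumr_ge0 => e _.
by rewrite mulr_ge0 ?p_ge0 // prodr_ge0 // => g _; apply: site_prob_ge0.
Qed.

Lemma trans_n_ge0 u nu t x y : 0 <= u <= 1 -> 0 <= nu <= 1 -> 0 <= trans_n p u nu t x y.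
Proof.
move=> u01 nu01; elim: t y => [|t IH] y /=; first exact: ler0n.
by apply: sumr_ge0 => z _; rewrite mulr_ge0 ?trans_ge0.
Qed.

Lemma trans_n0_ge0 t x y : 0 <= trans_n p 0 0 t x y.
Proof. by rewrite trans_n_ge0 // lexx ler01. Qed.

Lemma trans_nD u nu t s x y :
  trans_n p u nu (t + s) x y = \sum_z trans_n p u nu t x z * trans_n p u nu s z y.
Proof.
elim: s y => [|s IH] y /=.
  by rewrite addn0 (bigD1 y) //= eqxx mulr1 big1 ?addr0 // => z /negbTE ->; rewrite mulr0.
rewrite addnS /=; under eq_bigr do rewrite IH big_distrl /=.
rewrite exchange_big /=; apply: eq_bigr => z _.
by rewrite big_distrr /=; apply: eq_bigr => w _; rewrite mulrA.
Qed.

Lemma trans_nSl u nu t x y :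
  trans_n p u nu t.+1 x y = \sum_z trans p u nu x z * trans_n p u nu t z y.
Proof.
rewrite -add1n trans_nD; apply: eq_bigr => z _; congr (_ * _).
rewrite /= (bigD1 x) //= eqxx mul1r big1 ?addr0 // => w /negbTE.
by rewrite eq_sym => ->; rewrite mul0r.
Qed.

Lemma trans0_sum1 x : \sum_y trans p 0 0 x y = 1.
Proof.
under eq_bigr do rewrite trans0.
rewrite exchange_big -[RHS](p_sum1 x).
by apply: eq_bigr => e _; rewrite -big_distrr /= sum_eq_indicator mulr1.
Qed.

Lemma trans_n0_sum1 t x : \sum_y trans_n p 0 0 t x y = 1.
Proof.
elim: t => [|t IH] /=; first by under eq_bigr do rewrite eq_sym; exact: sum_eq_indicator.
by rewrite exchange_big -[RHS]IH; apply: eq_bigr => z _; rewrite -big_distrr /= trans0_sum1 mulr1.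
Qed.

Lemma trans_n0_le1 t x y : trans_n p 0 0 t x y <= 1.
Proof.
rewrite -(trans_n0_sum1 t x) (bigD1 y) //= lerDl.
by apply: sumr_ge0 => z _; exact: trans_n0_ge0.
Qed.

Section Fixed.
Variable c : state G.
Hypothesis c_fixed : forall e, act e c = c.

Lemma trans0_fixed y : trans p 0 0 c y = (y == c)%:R.
Proof.
by rewrite trans0; under eq_bigr do rewrite c_fixed; rewrite -big_distrl /= p_sum1 mul1r.
Qed.

Lemma trans_n0_fixed t y : trans_n p 0 0 t c y = (y == c)%:R.
Proof.
elim: t y => [|t IH] y /=; first by rewrite eq_sym.
rewrite (bigD1 c) //= IH eqxx mul1r big1 ?addr0; first exact: trans0_fixed.
by move=> z /negbTE; rewrite IH => ->; rewrite mul0r.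
Qed.

Lemma trans_n0_fixed_nondecreasing x : nondecreasing_seq (fun t => trans_n p 0 0 t x c).
Proof.
apply/nondecreasing_seqP => t /=; rewrite (bigD1 c) //= trans0_fixed eqxx mulr1 lerDl.
by apply: sumr_ge0 => z _; rewrite mulr_ge0 ?trans_ge0 ?trans_n_ge0 // lexx ler01.
Qed.

Lemma absorb_prob_cvg x : (fun t => trans_n p 0 0 t x c) @ \oo --> absorb_prob p x c.
Proof.
apply: nondecreasing_is_cvgn; first exact: trans_n0_fixed_nondecreasing.
by exists 1 => _ [t _ <-]; exact: trans_n0_le1.
Qed.

Lemma trans_n0_le_absorb_prob t x : trans_n p 0 0 t x c <= absorb_prob p x c.
Proof.
exact: (nondecreasing_cvgn_le (@trans_n0_fixed_nondecreasing x) (cvgP _ (@absorb_prob_cvg x)) t).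
Qed.

Lemma absorb_prob_ge0 x : 0 <= absorb_prob p x c.
Proof. by apply: le_trans (trans_n0_le_absorb_prob 0 x); exact: ler0n. Qed.

Lemma absorb_prob_harmonic x :
  absorb_prob p x c = \sum_z trans p 0 0 x z * absorb_prob p z c.
Proof.
have shifted : (fun t => trans_n p 0 0 (t + 1) x c) @ \oo --> absorb_prob p x c.
  by rewrite (cvg_shiftn 1 (fun t => trans_n p 0 0 t x c)); exact: absorb_prob_cvg.
have one_step : (fun t => trans_n p 0 0 (t + 1) x c) @ \oo -->
    \sum_z trans p 0 0 x z * absorb_prob p z c.
  under eq_cvg do rewrite addn1 trans_nSl.
  by apply: cvg_sum => z _; apply: cvgMr; exact: absorb_prob_cvg.
exact: (cvg_unique _ shifted one_step).
Qed.

End Fixed.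

Lemma trans0_act_ge x e : p x e <= trans p 0 0 x (act e x).
Proof.
rewrite trans0 (bigD1 e) //= eqxx mulr1 lerDl.
by apply: sumr_ge0 => f _; rewrite mulr_ge0 ?p_ge0 ?ler0n.
Qed.

Definition run (s : seq (event G)) (x : state G) := foldl (fun x e => act e x) x s.

Lemma runE s x : run s x = [ffun h => x (foldr (@tilde G) h s)].
Proof.
elim: s x => [|e s IH] x /=; first by apply/ffunP => h; rewrite ffunE.
by rewrite /run /= -/(run s _) IH; apply/ffunP => h; rewrite !ffunE.
Qed.

Lemma trans_n0_run_ge (s : seq (event G)) (d : R) x : 0 <= d ->
  (forall x e, e \in s -> d <= p x e) -> d ^+ size s <= trans_n p 0 0 (size s) x (run s x).
Proof.
move=> d0; elim: s x => [|e s IH] x d_le; first by rewrite /= expr0 eqxx.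
rewrite [size _]/= trans_nSl (bigD1 (act e x)) //= exprS.
rewrite -[X in X <= _]addr0; apply: lerD; last first.
  by apply: sumr_ge0 => z _; rewrite mulr_ge0 ?trans_ge0 ?trans_n_ge0 // lexx ler01.
apply: ler_pM; rewrite ?exprn_ge0 //.
  by apply: le_trans (trans0_act_ge x e); apply: d_le; exact: mem_head.
by apply: IH => y f f_s; apply: d_le; rewrite in_cons f_s orbT.
Qed.

End Kernel.

Definition polymorphic (G : finType) (x : state G) := (x != allA G) && (x != alla G).

Section Absorption.
Variables (G : finType) (R : realType) (p : state G -> event G -> R).
Hypotheses (G_gt0 : (0 < #|G|)%N) (p_rule : replacement_rule p) (p_fix : fixation_axiom p).

Local Notation A := (allA G).
Local Notation a := (alla G).
Local Notation T := (trans_n p 0 0).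

Lemma allA_neq_alla : A != a.
Proof. by have [g _] := card_gt0P G_gt0; apply/eqP => /ffunP /(_ g); rewrite !ffunE. Qed.

Lemma sum_monomorphic (V : nmodType) (F : state G -> V) :
  \sum_y F y = F A + F a + \sum_(y | polymorphic y) F y.
Proof.
rewrite (bigD1 A) //= (bigD1 a) /=; last by rewrite eq_sym allA_neq_alla.
by rewrite addrA; congr (_ + _); apply: eq_bigl => y; rewrite andbC.
Qed.

Lemma fixation_lower_bound g (s : seq (event G)) :
  (forall e, e \in s -> forall x, 0 < p x e) -> (forall h, foldr (@tilde G) h s = g) ->
  exists2 d : R, 0 < d & forall x, d <= T (size s) x [ffun _ => x g].
Proof.
move=> s_pos s_to_g.
pose d := \big[Num.min/1]_(xe : state G * event G | xe.2 \in s) p xe.1 xe.2.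
have d_gt0 : 0 < d by apply: lt_bigmin => // -[x e] /= e_s; exact: s_pos.
have d_le x e : e \in s -> d <= p x e by exact: (@bigmin_le_cond _ _ _ 1 (x, e)).
exists (d ^+ size s) => [|x]; first exact: exprn_gt0.
have -> : [ffun _ => x g] = run s x by rewrite runE; apply/ffunP => h; rewrite !ffunE s_to_g.
exact: trans_n0_run_ge (ltW d_gt0) d_le.
Qed.

Definition unabsorbed t x := \sum_(y | polymorphic y) T t x y.

Lemma unabsorbedE t x : unabsorbed t x = 1 - T t x A - T t x a.
Proof. by rewrite -(trans_n0_sum1 p_rule t x) sum_monomorphic /unabsorbed; ring. Qed.

Lemma unabsorbed_ge0 t x : 0 <= unabsorbed t x.
Proof. by apply: sumr_ge0 => y _; exact: trans_n0_ge0. Qed.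

Lemma unabsorbed_monomorphic t : unabsorbed t A = 0 /\ unabsorbed t a = 0.
Proof.
rewrite !unabsorbedE !(trans_n0_fixed p_rule (@act_allA G)) !(trans_n0_fixed p_rule (@act_alla G)).
by rewrite !eqxx eq_sym (negbTE allA_neq_alla) /=; split; ring.
Qed.

Lemma unabsorbed_shift t m x : unabsorbed (t + m) x = \sum_z T t x z * unabsorbed m z.
Proof.
rewrite /unabsorbed; under eq_bigr do rewrite trans_nD.
by rewrite exchange_big /=; apply: eq_bigr => z _; rewrite big_distrr.
Qed.

Lemma unabsorbed_contract m (d : R) t x : (forall z, unabsorbed m z <= 1 - d) ->
  unabsorbed (t + m) x <= (1 - d) * unabsorbed t x.
Proof.
move=> m_bound; have [unabsA unabsa] := unabsorbed_monomorphic m.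
rewrite unabsorbed_shift sum_monomorphic unabsA unabsa !mulr0 !add0r /unabsorbed mulr_sumr.
by apply: ler_sum => z _; rewrite mulrC ler_wpM2r ?m_bound ?trans_n0_ge0.
Qed.

Lemma unabsorbed_cvg x : unabsorbed t x @[t --> \oo] --> 1 - absorb_prob p x A - absorb_prob p x a.
Proof.
under eq_cvg do rewrite unabsorbedE.
apply: cvgB; [apply: cvgB; [exact: cvg_cst|]|]; apply: absorb_prob_cvg => //.
  exact: act_allA.
exact: act_alla.
Qed.

Lemma absorb_prob_sum1 x : absorb_prob p x A + absorb_prob p x a = 1.
Proof.
have [g [s [_ s_pos _ s_to_g]]] := p_fix; set m := size s.
have [d d_gt0 d_le] := fixation_lower_bound s_pos s_to_g.
have m_bound z : unabsorbed m z <= 1 - d.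
  have := trans_n0_ge0 p_rule m z A; have := trans_n0_ge0 p_rule m z a.
  by rewrite unabsorbedE; have := d_le z; case: (z g) => ? ? ?; lra.
set L := 1 - absorb_prob p x A - absorb_prob p x a.
suff : L = 0 by rewrite /L; lra.
have L_ge0 : 0 <= L.
  by apply: (ler_cvg_to (cvg_cst 0) (@unabsorbed_cvg x)); apply: nearW => t; exact: unabsorbed_ge0.
have L_contract : L <= (1 - d) * L.
  have shifted : unabsorbed (t + m) x @[t --> \oo] --> L.
    by rewrite (cvg_shiftn m (unabsorbed^~ x)); exact: unabsorbed_cvg.
  apply: (ler_cvg_to shifted (cvgMr (@unabsorbed_cvg x))).
  by apply: nearW => t; exact: unabsorbed_contract.
nra.
Qed.

Lemma trans_n0_polymorphic_cvg0 x y : polymorphic y -> T t x y @[t --> \oo] --> 0.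
Proof.
move=> y_poly; have := @unabsorbed_cvg x.
have -> : 1 - absorb_prob p x A - absorb_prob p x a = 0 by have := absorb_prob_sum1 x; lra.
move=> unabsorbed_cvg0.
apply: (squeeze_cvgr _ (cvg_cst 0) unabsorbed_cvg0); apply: nearW => t.
rewrite trans_n0_ge0 // /unabsorbed (bigD1 y) //= lerDl.
by apply: sumr_ge0 => z _; exact: trans_n0_ge0.
Qed.

Lemma absorb_prob_allA : absorb_prob p A A = 1.
Proof.
rewrite /absorb_prob; under eq_fun do rewrite (trans_n0_fixed p_rule (@act_allA G)) eqxx.
exact: lim_cst.
Qed.

Lemma absorb_prob_alla : absorb_prob p a A = 0.
Proof.
rewrite /absorb_prob.
under eq_fun do rewrite (trans_n0_fixed p_rule (@act_alla G)) (negbTE allA_neq_alla).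
exact: lim_cst.
Qed.

End Absorption.

Section RightDerivative.
Variable R : realType.

Definition is_rderive0 (f : R -> R) (df : R) := (f u - f 0) / u @[u --> 0^'+] --> df.

Lemma near_right0_itv : \forall u \near (0 : R)^'+, 0 < u <= 1.
Proof.
near=> u; apply/andP; split; [near: u; exact: nbhs_right_gt|near: u; exact: nbhs_right_ltW].
Unshelve. all: by end_near.
Qed.

Lemma near_right0_neq0 : \forall u \near (0 : R)^'+, u != 0.
Proof. by apply: filterS near_right0_itv => u /andP[/lt0r_neq0]. Qed.

Lemma is_rderive0_cvg f df : is_rderive0 f df -> f u @[u --> 0^'+] --> f 0.
Proof.
move=> f_df; have u_cvg0 : u @[u --> (0 : R)^'+] --> 0 by apply: cvg_at_right_filter; exact: cvg_id.
have : f 0 + u * ((f u - f 0) / u) @[u --> 0^'+] --> f 0 + 0 * df.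
  by apply: cvgD; [exact: cvg_cst|exact: cvgM].
rewrite mul0r addr0; apply: cvg_trans; apply: near_eq_cvg.
by apply: filterS near_right0_neq0 => u u_neq0; rewrite mulrC divfK // addrC subrK.
Qed.

Lemma is_rderive0_cst c : is_rderive0 (fun=> c) 0.
Proof. by rewrite /is_rderive0; under eq_fun do rewrite subrr mul0r; exact: cvg_cst. Qed.

Lemma is_rderive0_affine c d : is_rderive0 (fun u => c + u * d) d.
Proof.
apply: cvg_trans (cvg_cst d : (fun=> d) @ 0^'+ --> d); apply: near_eq_cvg.
by apply: filterS near_right0_neq0 => u u_neq0; rewrite mul0r addr0 addrC addKr mulrC mulKf.
Qed.

Lemma is_rderive0_sum (I : Type) (r : seq I) (P : pred I) (f : I -> R -> R) (df : I -> R) :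
  (forall i, P i -> is_rderive0 (f i) (df i)) ->
  is_rderive0 (fun u => \sum_(i <- r | P i) f i u) (\sum_(i <- r | P i) df i).
Proof.
move=> f_df; rewrite /is_rderive0; under eq_fun do rewrite -sumrB mulr_suml.
exact: cvg_sum.
Qed.

Lemma is_rderive0M f g df dg : is_rderive0 f df -> is_rderive0 g dg ->
  is_rderive0 (fun u => f u * g u) (df * g 0 + f 0 * dg).
Proof.
move=> f_df g_dg.
have quotM u :
  (f u * g u - f 0 * g 0) / u = (f u - f 0) / u * g u + f 0 * ((g u - g 0) / u) by ring.
rewrite /is_rderive0; under eq_fun do rewrite quotM.
by apply: cvgD; [apply: cvgM; [exact: f_df|exact: is_rderive0_cvg g_dg]|exact: cvgMr].
Qed.

Lemma is_rderive0_prod (I : eqType) (r : seq I) (f : I -> R -> R) (df : I -> R) :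
  uniq r -> (forall i, is_rderive0 (f i) (df i)) ->
  is_rderive0 (fun u => \prod_(i <- r) f i u)
              (\sum_(k <- r) df k * \prod_(j <- r | j != k) f j 0).
Proof.
move=> + f_df; elim: r => [_|i r IH /= /andP[i_r r_uniq]].
  by rewrite big_nil; under eq_fun do rewrite big_nil; exact: is_rderive0_cst.
have i_neq k : k \in r -> (i != k) by move=> k_r; apply: contraNneq i_r => ->.
suff [-> ->] : (fun u => \prod_(j <- i :: r) f j u) = (fun u => f i u * \prod_(j <- r) f j u) /\
    \sum_(k <- i :: r) df k * \prod_(j <- i :: r | j != k) f j 0 =
    df i * \prod_(j <- r) f j 0 + f i 0 * \sum_(k <- r) df k * \prod_(j <- r | j != k) f j 0.
  exact: is_rderive0M (f_df i) (IH r_uniq).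
split; first by apply/funext => u; rewrite big_cons.
rewrite big_cons big_cons eqxx /= big_distrr /=; congr (_ * _ + _).
  rewrite big_seq_cond [RHS]big_seq; apply: eq_bigl => j.
  by case j_r: (j \in r); rewrite //= eq_sym i_neq.
rewrite !big_seq; apply: eq_bigr => k k_r.
by rewrite big_cons i_neq // mulrCA.
Qed.

End RightDerivative.

Section Flip.
Variable I : finType.

Definition flip (c : {ffun I -> bool}) (k : I) : {ffun I -> bool} :=
  [ffun j => if j == k then ~~ c k else c j].

Lemma flip_neq c k : c != flip c k.
Proof. by apply/eqP => /ffunP /(_ k); rewrite ffunE eqxx; case: (c k). Qed.

Lemma prod_agree_off (R : comNzRingType) (y c : {ffun I -> bool}) k :
  \prod_(j | j != k) ((y j == c j)%:R : R) = ((y == c) || (y == flip c k))%:R.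
Proof.
have [agree|disagree] := boolP ((y == c) || (y == flip c k)).
  by apply: big1 => j j_k; case/orP: agree => /eqP ->; rewrite ?ffunE ?(negbTE j_k) eqxx.
have [j j_k /negbTE y_j] : exists2 j, j != k & y j != c j.
  apply/exists_inP; apply: contraNT disagree => /exists_inPn agree_off.
  have {}agree_off j : j != k -> y j = c j by move=> /agree_off /negPn /eqP.
  have [y_k|y_k] := eqVneq (y k) (c k); apply/orP; [left|right]; apply/eqP/ffunP => j.
    by have [->|/agree_off] := eqVneq j k.
  rewrite ffunE; have [->|/agree_off //] := eqVneq j k.
  by move: y_k; case: (y k); case: (c k).
by rewrite (bigD1 j) //= y_j mul0r.
Qed.

Lemma sum_agree_off (R : comNzRingType) (F : {ffun I -> bool} -> R) (c : {ffun I -> bool}) k :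
  \sum_y F y * \prod_(j | j != k) ((y j == c j)%:R : R) = F c + F (flip c k).
Proof.
under eq_bigr do rewrite prod_agree_off.
rewrite (bigD1 c) //= eqxx mulr1 (bigD1 (flip c k)) /=; last by rewrite eq_sym flip_neq.
rewrite eqxx orbT mulr1 big1 ?addr0 // => y /andP[/negbTE y_flip /negbTE y_c].
by rewrite y_flip y_c mulr0.
Qed.

End Flip.

Lemma flip_allA (G : finType) k : flip (allA G) k = ind [set~ k].
Proof. by apply/ffunP => j; rewrite !ffunE !inE; case: eqP. Qed.

Lemma flip_alla (G : finType) k : flip (alla G) k = ind [set k].
Proof. by apply/ffunP => j; rewrite !ffunE !inE; case: eqP. Qed.

Lemma deathE (G : finType) (R : realType) (p : state G -> event G -> R) x k :
  death p x k = \sum_e p x e * (e k != None)%:R.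
Proof.
rewrite /death /edge; under eq_bigr do rewrite big_mkcond.
rewrite exchange_big; apply: eq_bigr => e _ /=.
case: (e k) => [h|] /=; last by rewrite mulr0 big1.
rewrite (bigD1 h) //= eqxx mulr1 big1 ?addr0 // => g /negbTE g_h.
by case: eqP => // -[g_eq]; rewrite g_eq eqxx in g_h.
Qed.

Lemma btotE (G : finType) (R : realType) (p : state G -> event G -> R) x :
  btot p x = \sum_k death p x k.
Proof. by rewrite /btot /birth /death exchange_big. Qed.

Section Perturbation.
Variables (G : finType) (R : realType) (p : state G -> event G -> R) (nu : R).

Definition site_slope (e : event G) (x : state G) (g : G) (b : bool) : R :=
  site_prob 1 nu e x g b - site_prob 0 nu e x g b.

Lemma site_prob_affine u e x g b :
  site_prob u nu e x g b = site_prob 0 nu e x g b + u * site_slope e x g b.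
Proof.
rewrite /site_slope /site_prob; case: (e g) => [h|]; last by rewrite subrr mulr0 addr0.
by case: b; ring.
Qed.

Lemma site_slopeN e x g b : site_slope e x g (~~ b) = - site_slope e x g b.
Proof.
rewrite /site_slope /site_prob; case: (e g) => [h|]; last by rewrite !subrr oppr0.
by case: b; case: (x h) => /=; ring.
Qed.

Lemma is_rderive0_site_prob e x g b :
  is_rderive0 (fun u => site_prob u nu e x g b) (site_slope e x g b).
Proof. by under eq_fun do rewrite site_prob_affine; exact: is_rderive0_affine. Qed.

Definition trans_slope (x y : state G) : R :=
  \sum_e p x e * \sum_k site_slope e x k (y k) * \prod_(j | j != k) site_prob 0 nu e x j (y j).

Lemma is_rderive0_trans x y : is_rderive0 (fun u => trans p u nu x y) (trans_slope x y).
Proof.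
apply: is_rderive0_sum => e _.
have := is_rderive0M (@is_rderive0_cst _ (p x e))
  (is_rderive0_prod (index_enum_uniq G) (fun g => @is_rderive0_site_prob e x g (y g))).
by rewrite mul0r add0r.
Qed.

Lemma is_rderive0_trans_mean x (h : state G -> R) :
  is_rderive0 (fun u => \sum_y trans p u nu x y * h y) (\sum_y trans_slope x y * h y).
Proof.
apply: is_rderive0_sum => y _.
by have := is_rderive0M (@is_rderive0_trans x y) (@is_rderive0_cst _ (h y)); rewrite mulr0 addr0.
Qed.

Lemma trans_n_cvg0 t x y : trans_n p u nu t x y @[u --> 0^'+] --> trans_n p 0 nu t x y.
Proof.
elim: t y => [|t IH] y /=; first exact: cvg_cst.
apply: cvg_sum => z _; apply: cvgM; first exact: IH.
exact: is_rderive0_cvg (@is_rderive0_trans z y).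
Qed.

Lemma trans_slope_fixed c (h : state G -> R) : (forall e, act e c = c) ->
  \sum_y trans_slope c y * h y =
  \sum_e p c e * \sum_k site_slope e c k (~~ c k) * (h (flip c k) - h c).
Proof.
move=> c_fixed; rewrite /trans_slope.
under eq_bigr do rewrite mulr_suml.
rewrite exchange_big; apply: eq_bigr => e _ /=.
under eq_bigr do rewrite -mulrA mulr_suml.
rewrite -mulr_sumr exchange_big; congr (_ * _); apply: eq_bigr => k _ /=.
transitivity (\sum_(y : state G)
    site_slope e c k (y k) * h y * \prod_(j | j != k) ((y j == c j)%:R : R)).
  apply: eq_bigr => y _; rewrite mulrAC; congr (_ * _).
  by apply: eq_bigr => j _; rewrite site_prob0 c_fixed.
rewrite sum_agree_off ffunE eqxx -[c k]negbK site_slopeN negbK; ring.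
Qed.

Lemma site_slope_const e v k :
  site_slope e [ffun _ => v] k (~~ v) = (e k != None)%:R * (if v then 1 - nu else nu).
Proof.
rewrite /site_slope /site_prob !ffunE; case: (e k) => [h|] /=; last by rewrite subrr mul0r.
by rewrite ffunE; case: v => /=; ring.
Qed.

Lemma trans_slope_const v (h : state G -> R) (c := [ffun _ => v]) :
  \sum_y trans_slope c y * h y =
  (if v then 1 - nu else nu) * \sum_k death p c k * (h (flip c k) - h c).
Proof.
rewrite trans_slope_fixed; last by move=> e; rewrite /c act_const.
under eq_bigr do rewrite mulr_sumr.
rewrite exchange_big mulr_sumr; apply: eq_bigr => k _ /=.
rewrite deathE mulr_suml mulr_sumr; apply: eq_bigr => e _.
by rewrite ffunE site_slope_const [in RHS]mulrCA !mulrA.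
Qed.

End Perturbation.

Lemma cvg_two_weights (T : Type) (F : set_system T) {FF : Filter F} (R : realFieldType)
    (wA wa qA qa : T -> R) (cA ca : R) :
  cA + ca != 0 ->
  wA t + wa t @[t --> F] --> (1 : R) -> wA t * qA t + wa t * qa t @[t --> F] --> (0 : R) ->
  qA t @[t --> F] --> - ca -> qa t @[t --> F] --> cA ->
  wA t @[t --> F] --> cA / (cA + ca) /\ wa t @[t --> F] --> ca / (cA + ca).
Proof.
move=> c_neq0 w_cvg wq_cvg qA_cvg qa_cvg.
have dq_cvg : qA t - qa t @[t --> F] --> - (cA + ca) by rewrite opprD addrC; exact: cvgB.
have dq_neq0 : - (cA + ca) != 0 by rewrite oppr_eq0.
have wdq_cvg : wA t * (qA t - qa t) @[t --> F] --> 0 - 1 * cA.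
  have wdqE t : wA t * (qA t - qa t) = wA t * qA t + wa t * qa t - (wA t + wa t) * qa t by ring.
  by under eq_cvg do rewrite wdqE; apply: cvgB => //; exact: cvgM.
have wA_cvg : wA t @[t --> F] --> cA / (cA + ca).
  have : wA t * (qA t - qa t) / (qA t - qa t) @[t --> F] --> (0 - 1 * cA) / - (cA + ca).
    by apply: cvgM => //; exact: cvgV.
  rewrite sub0r mul1r invrN mulrNN; apply: cvg_trans; apply: near_eq_cvg.
  by apply: filterS (cvgr_neq0 _ dq_cvg dq_neq0) => t dq_neq0_t; rewrite mulfK.
split => //.
have : wA t + wa t - wA t @[t --> F] --> 1 - cA / (cA + ca) by exact: cvgB.
have -> : 1 - cA / (cA + ca) = ca / (cA + ca) by field.
by under eq_cvg do rewrite addrAC subrr add0r.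
Qed.

Section Limit.
Variables (G : finType) (R : realType) (p : state G -> event G -> R) (nu : R)
  (pi : R -> state G -> R).
Hypotheses (G_gt0 : (0 < #|G|)%N) (p_rule : replacement_rule p) (p_fix : fixation_axiom p).
Hypotheses (nu01 : 0 < nu < 1) (pi_stat : forall u, 0 < u <= 1 -> stationary (trans p u nu) (pi u)).

Local Notation A := (allA G).
Local Notation a := (alla G).
Local Notation hA x := (absorb_prob p x A).
Local Notation ha x := (absorb_prob p x a).

Lemma pi_trans_n u t y : 0 < u <= 1 -> \sum_x pi u x * trans_n p u nu t x y = pi u y.
Proof.
move=> /pi_stat[_ _ pi_inv]; elim: t y => [|t IH] y /=.
  by rewrite (bigD1 y) //= eqxx mulr1 big1 ?addr0 // => x /negbTE ->; rewrite mulr0.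
under eq_bigr do rewrite mulr_sumr.
rewrite exchange_big /= -[RHS]pi_inv; apply: eq_bigr => z _.
by rewrite -IH mulr_suml; apply: eq_bigr => x _; rewrite mulrA.
Qed.

Lemma pi_le_trans_n u t y : 0 < u <= 1 -> pi u y <= \sum_x trans_n p u nu t x y.
Proof.
move=> u01; have [pi_ge0 pi_sum1 _] := pi_stat u01; rewrite -(pi_trans_n t y u01).
have u01' : 0 <= u <= 1 by case/andP: u01 => /ltW -> ->.
have nu01' : 0 <= nu <= 1 by case/andP: nu01 => /ltW -> /ltW ->.
apply: ler_sum => x _; rewrite ler_piMl ?trans_n_ge0 //.
by rewrite -pi_sum1 (bigD1 x) //= lerDl sumr_ge0.
Qed.

Lemma pi_polymorphic_cvg0 y : polymorphic y -> pi u y @[u --> 0^'+] --> 0.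
Proof.
move=> y_poly; apply/cvgrPdist_lt => eps eps_gt0.
have sum_cvg0 : \sum_x trans_n p 0 nu t x y @[t --> \oo] --> 0.
  apply: cvg_sum0 => x _; under eq_cvg do rewrite trans_n0_nu.
  exact: trans_n0_polymorphic_cvg0.
have [t sum_lt] := filter_ex (cvgr_lt _ sum_cvg0 _ eps_gt0).
have : \sum_x trans_n p u nu t x y @[u --> 0^'+] --> \sum_x trans_n p 0 nu t x y.
  by apply: cvg_sum => x _; exact: trans_n_cvg0.
move=> /cvgr_lt /(_ _ sum_lt); apply: filter_app; apply: filterS (near_right0_itv R) => u u01.
apply: le_lt_trans; rewrite sub0r normrN ger0_norm ?pi_le_trans_n //.
by have [] := pi_stat u01.
Qed.

Definition drift u x := (\sum_y trans p u nu x y * hA y - hA x) / u.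

Lemma drift_cvg x : drift u x @[u --> 0^'+] --> \sum_y trans_slope p nu x y * hA y.
Proof.
have harmonic : \sum_y trans p 0 nu x y * hA y = hA x.
  rewrite [RHS](absorb_prob_harmonic p_rule (@act_allA G)).
  by apply: eq_bigr => y _; rewrite !trans0.
have := is_rderive0_trans_mean (p := p) (nu := nu) (x := x) (h := fun y => hA y).
by rewrite /is_rderive0 harmonic.
Qed.

Lemma pi_drift u : 0 < u <= 1 -> \sum_x pi u x * drift u x = 0.
Proof.
move=> /pi_stat[_ _ pi_inv]; rewrite /drift; under eq_bigr do rewrite mulrA.
rewrite -mulr_suml.
suff -> : \sum_x pi u x * (\sum_y trans p u nu x y * hA y - hA x) = 0 by rewrite mul0r.
under eq_bigr do rewrite mulrBr mulr_sumr.
rewrite sumrB exchange_big /=; apply/eqP; rewrite subr_eq0; apply/eqP; apply: eq_bigr => y _.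
by rewrite -pi_inv mulr_suml; apply: eq_bigr => x _; rewrite mulrA.
Qed.

Lemma death_ge0 x k : 0 <= death p x k.
Proof. by apply: sumr_ge0 => h _; apply: sumr_ge0 => e _; exact: p_ge0. Qed.

Lemma fixation_site : exists g, (forall x, 0 < death p x g) /\ 0 < hA (ind [set g]).
Proof.
have [g [s [_ s_pos [e e_s g_e] s_to_g]]] := p_fix.
exists g; split => [x|].
  rewrite deathE (bigD1 e) //=; move: g_e; rewrite inE => ->; rewrite mulr1.
  by rewrite ltr_pwDl ?s_pos // sumr_ge0 // => f _; rewrite mulr_ge0 ?p_ge0 ?ler0n.
have [d d_gt0 /(_ (ind [set g]))] := fixation_lower_bound p_rule s_pos s_to_g.
rewrite ffunE inE eqxx => d_le; apply: lt_le_trans d_gt0 (le_trans d_le _).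
exact: (trans_n0_le_absorb_prob p_rule (@act_allA G)).
Qed.

Lemma btot_gt0 x : 0 < btot p x.
Proof.
have [g [death_gt0 _]] := fixation_site.
by rewrite btotE (bigD1 g) //= ltr_pwDl ?death_gt0 // sumr_ge0 // => k _; exact: death_ge0.
Qed.

Lemma btot_rhoA : btot p a * rhoA p = \sum_g death p a g * hA (ind [set g]).
Proof.
rewrite /rhoA mulr_sumr; apply: eq_bigr => g _.
by rewrite mulrA mulrCA divff ?mulr1 // gt_eqF ?btot_gt0.
Qed.

Lemma btot_rhoa : btot p A * rhoa p = \sum_g death p A g * ha (ind [set~ g]).
Proof.
rewrite /rhoa mulr_sumr; apply: eq_bigr => g _.
by rewrite mulrA mulrCA divff ?mulr1 // gt_eqF ?btot_gt0.
Qed.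

Lemma drift_allA_cvg : drift u A @[u --> 0^'+] --> - ((1 - nu) * btot p A * rhoa p).
Proof.
have := @drift_cvg A; rewrite (trans_slope_const p nu true) /=.
suff -> : \sum_k death p A k * (hA (flip A k) - hA A) = - (btot p A * rhoa p).
  by rewrite mulrN mulrA.
rewrite btot_rhoa -sumrN; apply: eq_bigr => k _.
rewrite flip_allA absorb_prob_allA // -mulrN; congr (_ * _).
by have := absorb_prob_sum1 G_gt0 p_rule p_fix (ind [set~ k]); lra.
Qed.

Lemma drift_alla_cvg : drift u a @[u --> 0^'+] --> nu * btot p a * rhoA p.
Proof.
have := @drift_cvg a; rewrite (trans_slope_const p nu false) /=.
suff -> : \sum_k death p a k * (hA (flip a k) - hA a) = btot p a * rhoA p by rewrite mulrA.
rewrite btot_rhoA; apply: eq_bigr => k _.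
by rewrite flip_alla absorb_prob_alla // subr0.
Qed.

Lemma weight_allA_gt0 : 0 < nu * btot p a * rhoA p.
Proof.
have [g [death_gt0 hA_gt0]] := fixation_site.
rewrite -mulrA mulr_gt0 //; first by case/andP: nu01.
rewrite btot_rhoA (bigD1 g) //= ltr_pwDl ?mulr_gt0 // sumr_ge0 // => k _.
by rewrite mulr_ge0 ?death_ge0 ?absorb_prob_ge0 //; exact: act_allA.
Qed.

Lemma weight_alla_ge0 : 0 <= (1 - nu) * btot p A * rhoa p.
Proof.
rewrite -mulrA mulr_ge0 //; first by case/andP: nu01 => _ /ltW; rewrite subr_ge0.
rewrite btot_rhoa sumr_ge0 // => k _.
by rewrite mulr_ge0 ?death_ge0 ?absorb_prob_ge0 //; exact: act_alla.
Qed.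

Lemma pi_monomorphic_cvg (cA := nu * btot p a * rhoA p) (ca := (1 - nu) * btot p A * rhoa p) :
  pi u A @[u --> 0^'+] --> cA / (cA + ca) /\ pi u a @[u --> 0^'+] --> ca / (cA + ca).
Proof.
apply: cvg_two_weights (drift_allA_cvg) (drift_alla_cvg).
- by rewrite gt_eqF // ltr_pwDl ?weight_allA_gt0 ?weight_alla_ge0.
- have : 1 - \sum_(y : state G | polymorphic y) pi u y @[u --> 0^'+] --> (1 - 0 : R).
    by apply: cvgB; [exact: cvg_cst|apply: cvg_sum0 => y; exact: pi_polymorphic_cvg0].
  rewrite subr0; apply: cvg_trans; apply: near_eq_cvg.
  apply: filterS (near_right0_itv R) => u /pi_stat[_ pi_sum1 _].
  by rewrite -[in LHS]pi_sum1 (sum_monomorphic G_gt0) addrK.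
- have : \sum_(y : state G | polymorphic y) pi u y * drift u y @[u --> 0^'+] --> 0.
    apply: cvg_sum0 => y y_poly.
    rewrite -[X in _ --> X](mul0r (\sum_z trans_slope p nu y z * hA z)).
    by apply: cvgM; [exact: pi_polymorphic_cvg0 y_poly|exact: drift_cvg].
  move/cvgN; rewrite oppr0; apply: cvg_trans; apply: near_eq_cvg.
  apply: filterS (near_right0_itv R) => u /pi_drift.
  rewrite (sum_monomorphic G_gt0) /= => drift_sum0.
  by apply/eqP; rewrite eq_sym -addr_eq0 drift_sum0.
Qed.

End Limit.

Theorem theorem1 (G : finType) (R : realType)
  (p : state G -> event G -> R) (nu : R)
  (pi : R -> state G -> R) :
  (0 < #|G|)%N ->
  replacement_rule p ->
  fixation_axiom p ->
  0 < nu < 1 ->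
  (forall u, 0 < u <= 1 -> stationary (trans p u nu) (pi u)) ->
  forall x : state G,
    (fun u => pi u x) @ 0^'+ --> limit_value p nu x.
Proof.
move=> G_gt0 p_rule p_fix nu01 pi_stat x.
have [piA_cvg pia_cvg] := pi_monomorphic_cvg G_gt0 p_rule p_fix nu01 pi_stat.
rewrite /limit_value; have [->|x_A] := eqVneq x (allA G); first exact: piA_cvg.
have [->|x_a] := eqVneq x (alla G); first exact: pia_cvg.
apply: (pi_polymorphic_cvg0 G_gt0 p_rule p_fix nu01 pi_stat).
by rewrite /polymorphic x_A x_a.
Qed.
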